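(* Fix an integer $p \ge 2$ and positive reals $U_1,\dots,U_p > 0$, and a density $Q = 1/m$ with $m$ a positive integer, $1 \le m \le p-1$. Consider spinless fermion occupation configurations $(n_i)_{i\in\mathbb{Z}}$, $n_i\in\{0,1\}$, on the infinite one-dimensional lattice that are periodic with some period $L$ (i.e. $n_{i+L}=n_i$) and have $N = QL$ occupied sites per period. The energy density of such a configuration is $$\varepsilon = \frac{1}{L}\sum_{i=1}^{L}\sum_{k=1}^{p} U_k\, n_i\, n_{i+k}.$$ A ground state is a periodic configuration of density $Q$ whose energy density is minimal among all periodic configurations of density $Q$ (of any period). Then in any ground state, the number of empty sites between any two consecutive occupied sites (the ''space'' between them) is at most $p$.
   Context: This is the atomic limit ($t=0$) of the generalised $t$-$V$ model with Hamiltonian $H=\sum_i\sum_{m=1}^p U_m n_i n_{i+m}$, with repulsive interactions of maximal range $p$ (no convexity assumption on the $U_m$), at a critical (commensurate) density $Q=1/m$. A periodic system of $L$ sites is regarded as an infinite system with a unit cell of $L$ sites, and energies are compared via energy per site. *)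

From mathcomp Require Import all_boot all_order all_algebra.
Set Implicit Arguments. Unset Strict Implicit. Unset Printing Implicit Defensive.
Import Order.TTheory GRing.Theory Num.Theory.
Local Open Scope ring_scope.

Definition config := int -> bool.

Definition periodic (n : config) (L : nat) : Prop :=
  (0 < L)%N /\ forall i : int, n (i + L%:Z) = n i.

Definition occupied_per_period (n : config) (L : nat) : nat :=
  (\sum_(1 <= i < L.+1) (n i%:Z : nat))%N.

(* Density Q = 1/m : N = Q L, i.e. N * m = L. *)
Definition has_density_inv (n : config) (L m : nat) : Prop :=
  (occupied_per_period n L * m)%N = L.

Definition energy_density (R : realFieldType) (p : nat) (U : nat -> R)
    (n : config) (L : nat) : R :=
  (\sum_(1 <= i < L.+1) \sum_(1 <= k < p.+1)
      U k * (n i%:Z)%:R * (n (i%:Z + k%:Z))%:R) / L%:R.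

Definition ground_state (R : realFieldType) (p : nat) (U : nat -> R) (m : nat)
    (n : config) (L : nat) : Prop :=
  [/\ periodic n L, has_density_inv n L m &
      forall (n' : config) (L' : nat), periodic n' L' -> has_density_inv n' L' m ->
        energy_density p U n L <= energy_density p U n' L'].

From mathcomp Require Import all_boot all_order all_algebra.
From mathcomp Require Import zify ring lra.
From Stdlib Require Import Classical.
Set Implicit Arguments. Unset Strict Implicit. Unset Printing Implicit Defensive.
Import Order.TTheory GRing.Theory Num.Theory.
Local Open Scope ring_scope.

(* Suppose a ground state of period L has more than p empty sites between two
   consecutive particles.  Deleting one of those empty sites changes no
   interaction, which gives a configuration c of period L - 1 with the same
   N = L/m particles and the same energy E per period.  It is denser than
   1/(p+1), so two of its particles are within distance p and E > 0.  The
   removal costs (bonds to the right plus bonds to the left) of the particles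
   of one period of c add up to 2E, so some particle x0 costs more than E/N.
   Taking m periods of c and deleting the copies of x0 gives density exactly
   1/m and energy density (mE - cost)/(m(L - 1)) < E/L, contradicting
   minimality. *)

Definition has_period (T : Type) (f : int -> T) (P : nat) : Prop :=
  forall x, f (x + P%:Z) = f x.

Lemma has_period_mul (T : Type) (f : int -> T) (q P : nat) :
  has_period f P -> has_period f (q * P).
Proof.
move=> fP; elim: q => [|q IH] x; first by rewrite mul0n addr0.
by rewrite mulSn PoszD addrA IH fP.
Qed.

Definition on_orbit (P : nat) (x0 x : int) : bool := ((x - x0) %% P%:Z)%Z == 0.

Lemma on_orbit_periodic (P : nat) x0 : has_period (on_orbit P x0) P.
Proof. by move=> x; rewrite /on_orbit addrAC modzDr. Qed.

Lemma on_orbit_window (P t : nat) x0 : (t < P)%N ->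
  on_orbit P x0 (x0 + t%:Z) = (t == 0)%N.
Proof. by move=> tP; rewrite /on_orbit addrAC subrr add0r modz_small //; lia. Qed.

Lemma on_orbit_apart (P k : nat) x0 x : (0 < k < P)%N ->
  ~~ (on_orbit P x0 x && on_orbit P x0 (x + k%:Z)).
Proof.
move=> kP; apply/andP => -[/eqP x_on]; apply/negP.
by rewrite /on_orbit addrAC -modzDml x_on add0r modz_small; lia.
Qed.

Definition repeat_window (c : config) (a : int) (P : nat) : config :=
  fun x => c (a + ((x - a) %% P%:Z)%Z).

Lemma repeat_window_periodic (c : config) (a : int) (P : nat) :
  has_period (repeat_window c a P) P.
Proof. by move=> x; rewrite /repeat_window addrAC modzDr. Qed.

Lemma repeat_window_id (c : config) (a : int) (P t : nat) : (t < P)%N ->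
  repeat_window c a P (a + t%:Z) = c (a + t%:Z).
Proof. by move=> tP; rewrite /repeat_window addrAC subrr add0r modz_small //; lia. Qed.

Definition remove_orbit (c : config) (P : nat) (x0 : int) : config :=
  fun x => c x && ~~ on_orbit P x0 x.

Lemma remove_orbit_periodic (c : config) (P : nat) x0 :
  has_period c P -> has_period (remove_orbit c P x0) P.
Proof. by move=> cP x; rewrite /remove_orbit cP on_orbit_periodic. Qed.

Section WindowSum.
Variable R : realFieldType.
Implicit Types (f g : int -> R) (a b : int).

Definition window_sum f a (P : nat) : R := \sum_(0 <= t < P) f (a + t%:Z).

Lemma window_sum_eq f g a (P : nat) :
  (forall x, f x = g x) -> window_sum f a P = window_sum g a P.
Proof. by move=> fg; apply: eq_bigr. Qed.

Lemma window_sumD f g a (P : nat) :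
  window_sum (fun x => f x + g x) a P = window_sum f a P + window_sum g a P.
Proof. exact: big_split. Qed.

Lemma window_sumB f g a (P : nat) :
  window_sum (fun x => f x - g x) a P = window_sum f a P - window_sum g a P.
Proof. exact: sumrB. Qed.

Lemma window_sumMl f (k : R) a (P : nat) :
  window_sum (fun x => k * f x) a P = k * window_sum f a P.
Proof. by rewrite /window_sum mulr_sumr. Qed.

Lemma window_sumMr f (k : R) a (P : nat) :
  window_sum (fun x => f x * k) a P = window_sum f a P * k.
Proof. by rewrite /window_sum mulr_suml. Qed.

Lemma window_sum_exchange (F : int -> nat -> R) a (P lo hi : nat) :
  window_sum (fun x => \sum_(lo <= k < hi) F x k) a P =
  \sum_(lo <= k < hi) window_sum (F^~ k) a P.
Proof. exact: exchange_big. Qed.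

Lemma window_sum_translate f (d : int) a (P : nat) :
  window_sum (fun x => f (x + d)) a P = window_sum f (a + d) P.
Proof. by apply: eq_bigr => t _; rewrite addrAC. Qed.

Lemma window_sum_cat f a (P1 P2 : nat) :
  window_sum f a (P1 + P2) = window_sum f a P1 + window_sum f (a + P1%:Z) P2.
Proof.
rewrite /window_sum (big_cat_nat _ (n := P1)) ?leq_addr //=; congr (_ + _).
rewrite -{1}[P1]add0n big_addn addKn; apply: eq_bigr => t _.
by rewrite PoszD addrA [a + t%:Z + _]addrAC.
Qed.

Lemma window_sum1 f a : window_sum f a 1 = f a.
Proof. by rewrite /window_sum big_nat1 addr0. Qed.

Lemma window_sum_shift f (P : nat) a b :
  has_period f P -> window_sum f a P = window_sum f b P.
Proof.
move=> fP; have step c : window_sum f (c + 1) P = window_sum f c P.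
  have := window_sum_cat f c 1 P.
  by rewrite addnC window_sum_cat !window_sum1 fP addrC => /addrI.
have shiftn (d : nat) c : window_sum f (c + d%:Z) P = window_sum f c P.
  by elim: d => [|d IH]; rewrite ?addr0 // -addn1 PoszD addrA step.
wlog ab : a b / a <= b.
  by move=> H; case: (lerP a b) => [/H // | /ltW/H ->].
by have -> : b = a + `|b - a|%N%:Z by lia.
Qed.

Lemma window_sum_periods f (q P : nat) a :
  has_period f P -> window_sum f a (q * P) = q%:R * window_sum f a P.
Proof.
move=> fP; elim: q a => [|q IH] a; first by rewrite mul0n mul0r /window_sum big_geq.
rewrite mulSn window_sum_cat IH (window_sum_shift (a + P%:Z) a fP).
by rewrite -addn1 natrD mulrDl mul1r addrC.
Qed.

Lemma window_sum_orbit g (P : nat) x0 : (0 < P)%N ->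
  window_sum (fun x => g x * (on_orbit P x0 x)%:R) x0 P = g x0.
Proof.
case: P => // P _; rewrite /window_sum big_nat_recl // on_orbit_window // addr0 mulr1.
rewrite big_nat_cond big1 ?addr0 // => t /andP[/andP[_ tP] _].
by rewrite on_orbit_window ?mulr0.
Qed.

End WindowSum.

Section Energy.
Variables (R : realFieldType) (p : nat) (U : nat -> R).
Hypothesis U_gt0 : forall k : nat, (1 <= k <= p)%N -> 0 < U k.
Implicit Types (c : config) (x a : int).

Definition occupation c x : R := (c x)%:R.

Definition site_energy c x : R :=
  \sum_(1 <= k < p.+1) U k * (c x)%:R * (c (x + k%:Z))%:R.

Definition incoming_energy c x : R :=
  \sum_(1 <= k < p.+1) U k * (c (x - k%:Z))%:R * (c x)%:R.

Definition removal_cost c x : R := site_energy c x + incoming_energy c x.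

Lemma energy_density_window c (L : nat) :
  energy_density p U c L = window_sum (site_energy c) 1 L / L%:R.
Proof.
rewrite /energy_density /window_sum; congr (_ / _).
rewrite -{1}[1%N]add0n big_addn subn1; apply: eq_bigr => t _.
by rewrite addn1 -[t.+1]add1n PoszD.
Qed.

Lemma occupied_window c (L : nat) :
  (occupied_per_period c L)%:R = window_sum (occupation c) 1 L.
Proof.
rewrite /occupied_per_period natr_sum /window_sum.
rewrite -{1}[1%N]add0n big_addn subn1; apply: eq_bigr => t _.
by rewrite addn1 -[t.+1]add1n PoszD.
Qed.

Lemma occupation_periodic c (P : nat) : has_period c P -> has_period (occupation c) P.
Proof. by move=> cP x; rewrite /occupation cP. Qed.

Lemma site_energy_periodic c (P : nat) : has_period c P -> has_period (site_energy c) P.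
Proof. by move=> cP x; apply: eq_bigr => k _; rewrite cP addrAC cP. Qed.

Lemma site_energy_eq0 c x : ~~ c x -> site_energy c x = 0.
Proof.
by move/negbTE=> cx; rewrite /site_energy big1 // => k _; rewrite cx mulr0 mul0r.
Qed.

Lemma removal_cost_eq0 c x : ~~ c x -> removal_cost c x = 0.
Proof.
move=> cx; rewrite /removal_cost site_energy_eq0 // add0r /incoming_energy big1 // => k _.
by rewrite (negbTE cx) mulr0.
Qed.

Lemma site_energy_ge0 c x : 0 <= site_energy c x.
Proof.
rewrite /site_energy big_nat_cond; apply: sumr_ge0 => k /andP[k_bd _].
by rewrite !mulr_ge0 // ltW // U_gt0 //; lia.
Qed.

Lemma site_energy_gt0 c x (k : nat) :
  (1 <= k <= p)%N -> c x -> c (x + k%:Z) -> 0 < site_energy c x.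
Proof.
move=> k_bd cx cxk; rewrite /site_energy (bigD1_seq k) ?iota_uniq //=; last first.
  by rewrite mem_index_iota; lia.
rewrite cx cxk !mulr1 ltr_wpDr ?U_gt0 //.
rewrite big_seq_cond; apply: sumr_ge0 => i /andP[/[!mem_index_iota] i_bd _].
by rewrite !mulr_ge0 // ltW // U_gt0 //; lia.
Qed.

Lemma window_incoming_energy c (P : nat) a : has_period c P ->
  window_sum (incoming_energy c) a P = window_sum (site_energy c) a P.
Proof.
move=> cP; rewrite !window_sum_exchange; apply: eq_bigr => k _.
rewrite (window_sum_shift a (a + k%:Z)); last by move=> x; rewrite cP addrAC cP.
by rewrite -window_sum_translate; apply: window_sum_eq => x; rewrite addrK.
Qed.

Lemma sparse_window_le1 c x :
  (forall y (k : nat), (1 <= k <= p)%N -> c y -> ~~ c (y + k%:Z)) ->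
  window_sum (occupation c) x p.+1 <= 1.
Proof.
move=> sparse; rewrite /window_sum /occupation -natr_sum lern1.
suff : forall q, (q <= p.+1)%N -> (\sum_(0 <= t < q) c (x + t%:Z)%R <= 1)%N by apply.
elim=> [|q IH] qp; first by rewrite big_geq.
rewrite big_nat_recr //=; case cq: (c (x + q%:Z)); last by rewrite addn0 IH // ltnW.
rewrite big1_seq //= => t /[!mem_index_iota] /andP[_ tq]; apply/eqP; rewrite eqb0.
apply/negP => ct; have qt : (1 <= q - t <= p)%N by lia.
by have := sparse _ _ qt ct; rewrite -addrA -PoszD subnKC ?cq // ltnW.
Qed.

Lemma window_energy_gt0 c (P N : nat) a : has_period c P -> (0 < P)%N ->
  window_sum (occupation c) a P = N%:R -> (P < p.+1 * N)%N ->
  0 < window_sum (site_energy c) a P.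
Proof.
move=> cP P_gt0 cN dense.
case: (classic (exists y (k : nat), [/\ (1 <= k <= p)%N, c y & c (y + k%:Z)])).
  case=> y [k [k_bd cy cyk]].
  rewrite (window_sum_shift a y (site_energy_periodic cP)).
  apply: lt_le_trans (site_energy_gt0 k_bd cy cyk) _.
  case: P P_gt0 {cP cN dense} => // P _.
  rewrite /window_sum big_nat_recl // addr0 lerDl.
  by apply: sumr_ge0 => t _; exact: site_energy_ge0.
move=> no_close_pair; exfalso.
have sparse y (k : nat) : (1 <= k <= p)%N -> c y -> ~~ c (y + k%:Z).
  by move=> k_bd cy; apply/negP => cyk; apply: no_close_pair; exists y, k.
have total : window_sum (fun x => window_sum (occupation c) x p.+1) a P = (p.+1 * N)%:R.
  rewrite [LHS]exchange_big (eq_bigr (fun _ => N%:R)) /=.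
    by rewrite sumr_const_nat subn0 natrM mulr_natl.
  move=> k _; rewrite -cN; transitivity (window_sum (occupation c) (a + k%:Z) P).
    exact: window_sum_translate.
  exact/window_sum_shift/occupation_periodic.
have : window_sum (fun x => window_sum (occupation c) x p.+1) a P <= window_sum (fun=> 1) a P.
  by apply: ler_sum => t _; exact: sparse_window_le1.
by rewrite total /window_sum sumr_const_nat subn0 -[_ *+ _]mulr_natr mul1r ler_nat; lia.
Qed.

Lemma exists_costly_site c (P N : nat) a : has_period c P ->
  window_sum (occupation c) a P = N%:R -> (0 < N)%N ->
  0 < window_sum (site_energy c) a P ->
  exists2 x0, c x0 & window_sum (site_energy c) a P < N%:R * removal_cost c x0.
Proof.
move=> cP cN N_gt0 E_gt0; set E := window_sum _ a P.
apply: NNPP => none.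
have bound x : N%:R * removal_cost c x <= occupation c x * E.
  rewrite /occupation; case cx: (c x); last by rewrite removal_cost_eq0 ?cx // mulr0 mul0r.
  by rewrite mul1r leNgt; apply/negP => lt; apply: none; exists x.
have : window_sum (fun x => N%:R * removal_cost c x) a P <=
       window_sum (fun x => occupation c x * E) a P.
  by apply: ler_sum => t _; exact: bound.
rewrite window_sumMl window_sumMr cN /removal_cost window_sumD.
rewrite window_incoming_energy // -/E.
have : 0 < N%:R * E by rewrite mulr_gt0 ?ltr0n.
by nra.
Qed.

Lemma remove_orbit_occupation c (P : nat) x0 : (0 < P)%N -> c x0 ->
  window_sum (occupation (remove_orbit c P x0)) x0 P =
  window_sum (occupation c) x0 P - 1.
Proof.
move=> P_gt0 cx0; pose o x : R := (on_orbit P x0 x)%:R.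
have occ x : occupation (remove_orbit c P x0) x = occupation c x - occupation c x * o x.
  by rewrite /occupation /remove_orbit /o; case: (c x); case: (on_orbit P x0 x) => /=; ring.
by rewrite (window_sum_eq _ _ occ) window_sumB window_sum_orbit // /occupation cx0.
Qed.

Lemma remove_orbit_energy c (P : nat) x0 : has_period c P -> (p < P)%N ->
  window_sum (site_energy (remove_orbit c P x0)) x0 P =
  window_sum (site_energy c) x0 P - removal_cost c x0.
Proof.
move=> cP pP; pose o x : R := (on_orbit P x0 x)%:R.
pose bond k x := U k * (c x)%:R * (c (x + k%:Z))%:R.
have site x : site_energy (remove_orbit c P x0) x =
    site_energy c x - site_energy c x * o x - \sum_(1 <= k < p.+1) bond k x * o (x + k%:Z).
  rewrite /site_energy mulr_suml -!sumrB big_nat_cond [RHS]big_nat_cond.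
  apply: eq_bigr => k /andP[k_bd _].
  (* copies of x0 are more than p apart, so no bond joins two of them *)
  have := @on_orbit_apart P k x0 x.
  rewrite /remove_orbit /bond /o; case: (on_orbit P x0 x); case: (on_orbit P x0 _);
    rewrite ?andbT ?andbF /= => apart; try ring.
  by suff : false by []; apply: apart; lia.
have incoming k : window_sum (fun x => bond k x * o (x + k%:Z)) x0 P =
    U k * (c (x0 - k%:Z))%:R * (c x0)%:R.
  rewrite (window_sum_shift x0 (x0 - k%:Z)); last first.
    by move=> x; rewrite /bond /o cP addrAC cP on_orbit_periodic.
  have -> : window_sum (fun x => bond k x * o (x + k%:Z)) (x0 - k%:Z) P =
      window_sum (fun y => U k * (c (y - k%:Z))%:R * (c y)%:R * o y) (x0 - k%:Z + k%:Z) P.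
    by rewrite -[RHS]window_sum_translate; apply: eq_bigr => t _; rewrite addrK.
  by rewrite subrK window_sum_orbit //; lia.
rewrite (window_sum_eq _ _ site) !window_sumB window_sum_orbit; last by lia.
rewrite (window_sum_exchange (fun x k => bond k x * o (x + k%:Z))).
rewrite (eq_bigr _ (fun k _ => incoming k)).
by rewrite /removal_cost opprD addrA.
Qed.

Lemma exists_cheaper_config (m : nat) c (L1 N : nat) a :
  (0 < m)%N -> (p < L1)%N -> has_period c L1 ->
  window_sum (occupation c) a L1 = N%:R -> (N * m = L1.+1)%N ->
  0 < window_sum (site_energy c) a L1 ->
  exists c2 P, [/\ periodic c2 P, has_density_inv c2 P m &
    energy_density p U c2 P < window_sum (site_energy c) a L1 / L1.+1%:R].
Proof.
move=> m_gt0 pL1 cL1 cN NmL1 E_gt0; set E := window_sum _ a L1 in E_gt0 *.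
have N_gt0 : (0 < N)%N by case: N NmL1 cN.
have [x0 cx0 costly] := exists_costly_site cL1 cN N_gt0 E_gt0.
set P := (m * L1)%N; have cP : has_period c P := has_period_mul m cL1.
have c2P := remove_orbit_periodic x0 cP.
have NmR : L1.+1%:R = N%:R * m%:R :> R by rewrite -natrM NmL1.
have L1E : L1%:R = N%:R * m%:R - 1 :> R by rewrite -NmR -addn1 natrD addrK.
exists (remove_orbit c P x0), P; split.
- by split; [nia | exact: c2P].
- apply/eqP; rewrite -(eqr_nat R) natrM occupied_window.
  rewrite (window_sum_shift 1 x0 (occupation_periodic c2P)).
  rewrite remove_orbit_occupation //; last by nia.
  rewrite (window_sum_shift x0 a (occupation_periodic cP)) window_sum_periods; last first.
    exact: occupation_periodic.
  by rewrite cN /P natrM L1E; apply/eqP; ring.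
rewrite energy_density_window (window_sum_shift 1 x0 (site_energy_periodic c2P)).
rewrite remove_orbit_energy //; last by nia.
rewrite (window_sum_shift x0 a (site_energy_periodic cP)) window_sum_periods -/E; last first.
  exact: site_energy_periodic.
have L1_gt0 : (0 : R) < L1%:R by rewrite ltr0n; lia.
have m_gt0' : (0 : R) < m%:R by rewrite ltr0n.
rewrite /P natrM ltr_pdivrMr ?mulr_gt0 // mulrAC ltr_pdivlMr ?ltr0n // NmR.
have gap : 0 < N%:R * removal_cost c x0 - E by rewrite subr_gt0.
rewrite L1E; have := mulr_gt0 m_gt0' gap.
by nra.
Qed.

Lemma repeat_window_site_energy c a (P t : nat) : (t < P)%N ->
  (c (a + t%:Z) -> (t + p < P)%N) ->
  site_energy (repeat_window c a P) (a + t%:Z) = site_energy c (a + t%:Z).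
Proof.
move=> tP inside; case ct: (c (a + t%:Z)).
  rewrite /site_energy repeat_window_id // big_nat_cond [RHS]big_nat_cond.
  apply: eq_bigr => k /andP[k_bd _]; rewrite -addrA -PoszD repeat_window_id //.
  by have := inside ct; lia.
by rewrite !site_energy_eq0 ?repeat_window_id ?ct.
Qed.

Lemma squeeze_gap n (L : nat) i j : periodic n L -> i < j -> n i ->
  (forall k, i < k < j -> ~~ n k) -> p%:Z < j - i - 1 ->
  [/\ (p < L.-1)%N,
      window_sum (site_energy (repeat_window n j L.-1)) j L.-1 =
        window_sum (site_energy n) j L &
      window_sum (occupation (repeat_window n j L.-1)) j L.-1 =
        window_sum (occupation n) j L].
Proof.
move=> [L_gt0 nL] ij ni gap wide.
have jL : j <= i + L%:Z.
  rewrite leNgt; apply/negP => jL.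
  have iL_in : i < i + L%:Z < j by lia.
  by have := gap _ iL_in; rewrite nL ni.
have gapL y : i + L%:Z < y < j + L%:Z -> ~~ n y.
  by move=> y_in; rewrite -(subrK L%:Z y) nL; apply: gap; lia.
have last : ~~ n (j + L.-1%:Z) by apply: gapL; lia.
have L_split : L = (L.-1 + 1)%N by rewrite addn1 prednK.
split; first by lia.
  rewrite [in RHS]L_split window_sum_cat window_sum1 site_energy_eq0 // addr0.
  apply: eq_big_nat => t /andP[_ tL]; apply: repeat_window_site_energy => // nt.
  have : ~~ (i + L%:Z < j + t%:Z) by apply: (contraL _ nt) => lt; apply: gapL; lia.
  by lia.
rewrite [in RHS]L_split window_sum_cat window_sum1 /occupation (negbTE last) addr0.
by apply: eq_big_nat => t /andP[_ tL]; rewrite repeat_window_id.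
Qed.

End Energy.

Theorem theorem2 (R : realFieldType) (p : nat) (U : nat -> R) (m : nat)
    (hp : (2 <= p)%N)
    (hU : forall k : nat, (1 <= k <= p)%N -> 0 < U k)
    (hm : (1 <= m <= p.-1)%N)
    (n : config) (L : nat)
    (hgs : ground_state p U m n L) :
  forall i j : int, i < j -> n i -> n j ->
    (forall k : int, i < k < j -> ~~ n k) ->
    j - i - 1 <= p%:Z.
Proof.
move=> i j ij ni _ gap; rewrite leNgt; apply/negP => wide.
case: hgs => nL dens minimal; have [L_gt0 nP] := nL.
have [pL sameE sameN] := squeeze_gap U nL ij ni gap wide.
set c := repeat_window n j L.-1 in sameE sameN.
set N := occupied_per_period n L in dens.
have cN : window_sum (occupation R c) j L.-1 = N%:R.
  by rewrite sameN occupied_window; apply/window_sum_shift/occupation_periodic.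
have NmL : (N * m = L.-1.+1)%N by rewrite prednK.
have E_gt0 : 0 < window_sum (site_energy p U c) j L.-1.
  by apply: (window_energy_gt0 hU (repeat_window_periodic _ _ _) _ cN); nia.
have m_gt0 : (0 < m)%N by case/andP: hm.
have [c2 [P [c2P c2m cheaper]]] :=
  exists_cheaper_config m_gt0 pL (repeat_window_periodic n j L.-1) cN NmL E_gt0.
have := minimal c2 P c2P c2m.
rewrite energy_density_window (window_sum_shift 1 j (site_energy_periodic p U nP)).
by rewrite -sameE leNgt -[L in _ / L%:R](prednK L_gt0) cheaper.
Qed.
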